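(* Let $n\ge 1$, let $v\in\mathbb{S}^{n-1}=\{v\in\mathbb{R}^n:\|v\|=1\}$, and for class parameters $\alpha_k>0$, $v_k\in\mathbb{S}^{n-1}$, $b_k\in\mathbb{R}$ define the logit $u_k(x)=-\alpha_k B^{v_k}(x)+b_k$. (Poincaré) Fix $x\in\mathbb{R}^n$; for all $K<0$ with $|K|$ small enough, $x$ lies in the Poincaré ball $\mathbb{P}^n_K$. Then, as $K\to 0^-$, $$B^{v}(x)\to -2\langle v,x\rangle,\qquad u_k(x)\to 2\alpha_k\langle v_k,x\rangle+b_k .$$ (Lorentz) Fix $x_s\in\mathbb{R}^n$ and, for each $K<0$, let $x=[x_t,x_s^\top]^\top\in\mathbb{L}^n_K$ with $x_t=\sqrt{-1/K+\|x_s\|^2}$. Then, as $K\to 0^-$, $$B^{v}(x)\to -\langle v,x_s\rangle,\qquad u_k(x)\to \alpha_k\langle v_k,x_s\rangle+b_k .$$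
   Context: For $K<0$, the Poincaré ball is $\mathbb{P}^n_K=\{x\in\mathbb{R}^n:\|x\|^2<-1/K\}$, and its Busemann function in direction $v\in\mathbb{S}^{n-1}$ (for the geodesic ray from the origin with initial unit velocity $v$) is $B^v(x)=\frac{1}{\sqrt{-K}}\log\!\left(\frac{\|v-\sqrt{-K}\,x\|^2}{1+K\|x\|^2}\right)$. The Lorentz model is $\mathbb{L}^n_K=\{x=[x_t,x_s^\top]^\top\in\mathbb{R}^{n+1}: -x_t^2+\|x_s\|^2=1/K,\ x_t>0\}$, with Busemann function $B^v(x)=\frac{1}{\sqrt{-K}}\log\!\left(\sqrt{-K}\,(x_t-\langle x_s,v\rangle)\right)$. Here $\langle\cdot,\cdot\rangle$ and $\|\cdot\|$ are the Euclidean inner product and norm. *)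

From HB Require Import structures.
From mathcomp Require Import all_boot all_order all_algebra.
From mathcomp Require Import all_classical all_reals all_analysis.
Set Implicit Arguments. Unset Strict Implicit. Unset Printing Implicit Defensive.
Import Order.TTheory GRing.Theory Num.Theory.
Local Open Scope ring_scope.

Definition dotv {R : realType} {n : nat} (u w : 'rV[R]_n) : R :=
  \sum_(i < n) u 0 i * w 0 i.
Definition enorm {R : realType} {n : nat} (u : 'rV[R]_n) : R :=
  Num.sqrt (dotv u u).

Definition in_poincare_ball {R : realType} {n : nat} (K : R) (x : 'rV[R]_n) : Prop :=
  enorm x ^+ 2 < - K^-1.

Definition busemann_P {R : realType} {n : nat} (K : R) (v x : 'rV[R]_n) : R :=
  (Num.sqrt (- K))^-1 *
  ln (enorm (v - Num.sqrt (- K) *: x) ^+ 2 / (1 + K * enorm x ^+ 2)).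

Definition in_lorentz {R : realType} {n : nat} (K : R) (xt : R) (xs : 'rV[R]_n) : Prop :=
  - xt ^+ 2 + enorm xs ^+ 2 = K^-1 /\ 0 < xt.

Definition busemann_L {R : realType} {n : nat} (K : R) (v : 'rV[R]_n) (xt : R) (xs : 'rV[R]_n) : R :=
  (Num.sqrt (- K))^-1 * ln (Num.sqrt (- K) * (xt - dotv xs v)).

Definition lorentz_xt {R : realType} {n : nat} (K : R) (xs : 'rV[R]_n) : R :=
  Num.sqrt (- K^-1 + enorm xs ^+ 2).

From HB Require Import structures.
From mathcomp Require Import all_boot all_order all_algebra.
From mathcomp Require Import all_classical all_reals all_analysis.
From mathcomp Require Import ring lra.
Import Order.TTheory GRing.Theory Num.Theory.
Import numFieldNormedType.Exports.
Local Open Scope ring_scope.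
Local Open Scope classical_set_scope.

(* Both Busemann functions can be written as [(sqrt (-K))^-1 * ln (1 + sqrt (-K) * h K)]
   with [h K] convergent as [K --> 0^-]: in the Poincare ball
   [h K = (2 sqrt (-K) |x|^2 - 2 <v, x>) / (1 + K |x|^2)], and in the Lorentz model
   [h K = sqrt (-K) |x_s|^2 / (sqrt (1 - K |x_s|^2) + 1) - <x_s, v>], using
   [sqrt (-K) * x_t = sqrt (1 - K |x_s|^2)].  Since [y / (1 + y) <= ln (1 + y) <= y],
   [ln (1 + s y) / s] has the same limit as [y] when [s --> 0^+], and the logits
   follow by linearity of limits. *)

Section BusemannLimits.
Variable R : realType.

Lemma ge_ln1Dx (x : R) : -1 < x -> x / (1 + x) <= ln (1 + x).
Proof.
move=> x_gtN1; have x1_gt0 : 0 < 1 + x by lra.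
have := @le_ln1Dx R (- x / (1 + x)).
have -> : 1 + - x / (1 + x) = (1 + x)^-1 by field; rewrite gt_eqF.
rewrite lnV ?posrE // mulNr lerN2; apply.
rewrite ltrNl opprK ltr_pdivrMr //; lra.
Qed.

Lemma cvg_ln1D_div {T : Type} {F : set_system T} {FF : ProperFilter F}
    {s h : T -> R} {d : R} :
  (\forall t \near F, 0 < s t) -> s t @[t --> F] --> (0 : R) -> h t @[t --> F] --> d ->
  (s t)^-1 * ln (1 + s t * h t) @[t --> F] --> d.
Proof.
move=> s_gt0 s0 hd.
have sh0 : s t * h t @[t --> F] --> (0 : R) by rewrite -(mul0r d); exact: cvgM.
have shN1 : \forall t \near F, -1 < s t * h t.
  exact: cvgr_gt _ sh0 _ (ltrN10 R).
apply: (@squeeze_cvgr _ _ _ _ (fun t => h t / (1 + s t * h t)) h).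
- near=> t; have st : 0 < s t by near: t.
  have y_gtN1 : -1 < s t * h t by near: t.
  set y := s t * h t in y_gtN1 *.
  rewrite (_ : h t = (s t)^-1 * y); last by rewrite /y mulKf ?lt0r_neq0.
  rewrite -mulrA !ler_pM2l ?invr_gt0 // ge_ln1Dx //.
  exact: le_ln1Dx.
- have one_cvg : 1 + s t * h t @[t --> F] --> (1 : R).
    by have := cvgD (cvg_cst (1 : R)) sh0; rewrite addr0; apply.
  by have := cvgM hd (cvgV (oner_neq0 R) one_cvg); rewrite invr1 mulr1; apply.
- exact: hd.
Unshelve. all: by end_near.
Qed.

Lemma cvg_sqrtN0 : Num.sqrt (- K) @[K --> (0 : R)] --> (0 : R).
Proof.
rewrite -[X in _ --> X]sqrtr0 -[X in Num.sqrt X]oppr0.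
exact: continuous_comp (opp_continuous _) (@sqrt_continuous R _).
Qed.

Lemma cvg_1DMr (a : R) : 1 + K * a @[K --> (0 : R)] --> (1 : R).
Proof.
have K0 : K @[K --> (0 : R)] --> (0 : R) by exact: cvg_id.
by have := cvgD (cvg_cst (1 : R)) (cvgMr_tmp (b := a) K0); rewrite mul0r addr0; apply.
Qed.

Lemma logit_cvg {T : Type} {F : set_system T} {FF : Filter F} (f : T -> R)
    (l alpha b : R) :
  f t @[t --> F] --> l -> - alpha * f t + b @[t --> F] --> - alpha * l + b.
Proof. by move=> fl; apply: cvgD (cvg_cst _); exact: cvgMl_tmp. Qed.

Section Euclidean.
Variable n : nat.
Implicit Types (u w : 'rV[R]_n).

Lemma dotvC u w : dotv u w = dotv w u.
Proof. by apply: eq_bigr => i _; rewrite mulrC. Qed.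

Lemma sqr_enorm u : enorm u ^+ 2 = dotv u u.
Proof. by rewrite sqr_sqrtr // sumr_ge0 // => i _; exact: sqr_ge0. Qed.

Lemma sqr_enormBZ u w (t : R) :
  enorm (u - t *: w) ^+ 2 = enorm u ^+ 2 - 2 * t * dotv u w + t ^+ 2 * enorm w ^+ 2.
Proof.
rewrite !sqr_enorm /dotv !mulr_sumr -sumrB -big_split /=.
by apply: eq_bigr => i _; rewrite !mxE; ring.
Qed.

Lemma in_poincare_ballE K w : K < 0 ->
  in_poincare_ball K w <-> 0 < 1 + K * enorm w ^+ 2.
Proof.
move=> K_lt0; rewrite /in_poincare_ball -(ltr_nM2l K_lt0) mulrN mulfV ?lt_eqF //.
by rewrite -subr_gt0 opprK addrC.
Qed.

Lemma near_in_poincare_ball w : \forall K \near (0 : R)^'-, in_poincare_ball K w.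
Proof.
have pos := cvgr_gt _ (cvg_at_left_filter (cvg_1DMr (enorm w ^+ 2))) _ ltr01.
near=> K; apply/in_poincare_ballE; last by near: K; exact: pos.
by near: K; exact: nbhs_left_lt.
Unshelve. all: by end_near.
Qed.

Lemma busemann_P_argE K u w : enorm u = 1 -> K < 0 -> in_poincare_ball K w ->
  let t := Num.sqrt (- K) in
  enorm (u - t *: w) ^+ 2 / (1 + K * enorm w ^+ 2)
  = 1 + t * ((2 * t * enorm w ^+ 2 - 2 * dotv u w) / (1 + K * enorm w ^+ 2)).
Proof.
move=> u1 K_lt0 /(in_poincare_ballE _ _ K_lt0) ball t.
have KE : K = - t ^+ 2 by rewrite sqr_sqrtr ?opprK // oppr_ge0 ltW.
rewrite sqr_enormBZ u1 KE in ball *; field; exact: lt0r_neq0.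
Qed.

Lemma busemann_P_cvg u w : enorm u = 1 ->
  busemann_P K u w @[K --> (0 : R)^'-] --> - 2 * dotv u w.
Proof.
move=> u1; set a := enorm w ^+ 2; set c := dotv u w.
have h_cvg : (2 * Num.sqrt (- K) * a - 2 * c) / (1 + K * a) @[K --> (0 : R)^'-] --> - 2 * c.
  apply: cvg_at_left_filter.
  have := cvgM (cvgB (cvgMr_tmp (b := a) (cvgMl_tmp (a := 2) cvg_sqrtN0)) (cvg_cst (2 * c)))
    (cvgV (oner_neq0 R) (cvg_1DMr a)).
  by rewrite mulr0 mul0r sub0r invr1 mulr1 mulNr; apply.
apply: cvg_trans (near_eq_cvg _) (cvg_ln1D_div _ (cvg_at_left_filter cvg_sqrtN0) h_cvg).
- near=> K; have K_lt0 : K < 0 by near: K; exact: nbhs_left_lt.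
  have ball : in_poincare_ball K w by near: K; exact: near_in_poincare_ball.
  by rewrite /busemann_P busemann_P_argE.
- near=> K; rewrite sqrtr_gt0 oppr_gt0.
  by near: K; exact: nbhs_left_lt.
Unshelve. all: by end_near.
Qed.

Lemma lorentz_xt_in_lorentz K w : K < 0 -> in_lorentz K (lorentz_xt K w) w.
Proof.
move=> K_lt0; have Kinv_lt0 : K^-1 < 0 by rewrite invr_lt0.
have w2_ge0 : 0 <= enorm w ^+ 2 by exact: sqr_ge0.
have xt2_gt0 : 0 < - K^-1 + enorm w ^+ 2 by lra.
by rewrite /in_lorentz /lorentz_xt sqr_sqrtr ?sqrtr_gt0 ?ltW //; split=> //; ring.
Qed.

Lemma sqrtN_mul_lorentz_xt K w : K < 0 ->
  Num.sqrt (- K) * lorentz_xt K w = Num.sqrt (1 - K * enorm w ^+ 2).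
Proof.
move=> K_lt0; rewrite -sqrtrM ?oppr_ge0 ?ltW //; congr Num.sqrt.
by rewrite mulrDr mulrN mulNr opprK mulfV ?lt_eqF // mulNr.
Qed.

Lemma busemann_L_argE K u w : K < 0 ->
  let t := Num.sqrt (- K) in
  t * (lorentz_xt K w - dotv w u)
  = 1 + t * (t * enorm w ^+ 2 / (Num.sqrt (1 - K * enorm w ^+ 2) + 1) - dotv w u).
Proof.
move=> K_lt0 t; rewrite mulrBr sqrtN_mul_lorentz_xt //.
set a := enorm w ^+ 2; set r := Num.sqrt (1 - K * a).
have a_ge0 : 0 <= a by exact: sqr_ge0.
have r2 : r ^+ 2 = 1 - K * a by rewrite sqr_sqrtr // subr_ge0; nra.
have t2 : t ^+ 2 = - K by rewrite sqr_sqrtr // oppr_ge0 ltW.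
have r1_neq0 : r + 1 != 0 by rewrite gt_eqF // ltr_wpDl ?sqrtr_ge0.
have e : t * (t * a / (r + 1)) = r - 1.
  apply: (mulIf r1_neq0); rewrite mulrA mulfVK // mulrA -expr2 t2; nra.
by rewrite [in RHS]mulrBr e; ring.
Qed.

Lemma busemann_L_cvg u w :
  busemann_L K u (lorentz_xt K w) w @[K --> (0 : R)^'-] --> - dotv u w.
Proof.
rewrite dotvC; set a := enorm w ^+ 2; set c := dotv w u.
have r_cvg : Num.sqrt (1 - K * a) @[K --> (0 : R)] --> (1 : R).
  under eq_fun do rewrite -mulrN.
  by have := continuous_cvg _ (@sqrt_continuous R 1) (cvg_1DMr (- a)); rewrite sqrtr1; apply.
have h_cvg : Num.sqrt (- K) * a / (Num.sqrt (1 - K * a) + 1) - c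
    @[K --> (0 : R)^'-] --> - c.
  apply: cvg_at_left_filter.
  have := cvgB (cvgM (cvgMr_tmp (b := a) cvg_sqrtN0) (cvgV _ (cvgD r_cvg (cvg_cst (1 : R))))) (cvg_cst c).
  by rewrite !mul0r sub0r; apply; rewrite gt_eqF.
apply: cvg_trans (near_eq_cvg _) (cvg_ln1D_div _ (cvg_at_left_filter cvg_sqrtN0) h_cvg).
- near=> K; have K_lt0 : K < 0 by near: K; exact: nbhs_left_lt.
  by rewrite /busemann_L busemann_L_argE.
- near=> K; rewrite sqrtr_gt0 oppr_gt0.
  by near: K; exact: nbhs_left_lt.
Unshelve. all: by end_near.
Qed.

End Euclidean.
End BusemannLimits.

Theorem theorem1 (R : realType) (n : nat) (hn : (1 <= n)%N) (v : 'rV[R]_n)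
  (hv : enorm v = 1) :
  (* Poincare model *)
  (forall x : 'rV[R]_n,
     (\forall K \near (0:R)^'-, in_poincare_ball K x) /\
     (busemann_P K v x @[K --> (0:R)^'-] --> - 2 * dotv v x) /\
     (forall (alpha : R) (vk : 'rV[R]_n) (bk : R), 0 < alpha -> enorm vk = 1 ->
        (- alpha * busemann_P K vk x + bk) @[K --> (0:R)^'-]
          --> 2 * alpha * dotv vk x + bk)) /\
  (* Lorentz model *)
  (forall xs : 'rV[R]_n,
     (forall K : R, K < 0 -> in_lorentz K (lorentz_xt K xs) xs) /\
     (busemann_L K v (lorentz_xt K xs) xs @[K --> (0:R)^'-] --> - dotv v xs) /\
     (forall (alpha : R) (vk : 'rV[R]_n) (bk : R), 0 < alpha -> enorm vk = 1 ->
        (- alpha * busemann_L K vk (lorentz_xt K xs) xs + bk) @[K --> (0:R)^'-]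
          --> alpha * dotv vk xs + bk)).
Proof.
split=> [x | xs]; split.
- exact: near_in_poincare_ball.
- split=> [|alpha vk bk _ vk1]; first exact: busemann_P_cvg.
  rewrite (_ : 2 * alpha * _ + bk = - alpha * (- 2 * dotv vk x) + bk); last by ring.
  by apply: logit_cvg; exact: busemann_P_cvg.
- by move=> K; exact: lorentz_xt_in_lorentz.
- split=> [|alpha vk bk _ _]; first exact: busemann_L_cvg.
  rewrite (_ : alpha * _ + bk = - alpha * (- dotv vk xs) + bk); last by ring.
  by apply: logit_cvg; exact: busemann_L_cvg.
Qed.
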